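(* Let $R$ be an $h$-local domain. For each maximal ideal $\mathfrak m$ of $R$, let $X(\mathfrak m)$ be a finitely generated torsion-free $R_\mathfrak m$-module of rank $n$ (the same $n$ for all $\mathfrak m$). The following are equivalent: (i) there is a finitely generated torsion-free $R$-module $N$ of rank $n$ with $N_\mathfrak m\cong X(\mathfrak m)$ for every maximal ideal $\mathfrak m$ of $R$; (ii) $X(\mathfrak m)$ is a free $R_\mathfrak m$-module for all but finitely many maximal ideals $\mathfrak m$ of $R$.
   Context: A commutative domain is $h$-local if every non-zero element lies in only finitely many maximal ideals and every non-zero prime ideal is contained in a unique maximal ideal. A module is torsion-free if $M\to M\otimes Q$ is injective ($Q$ the field of fractions); its rank is $\dim_Q(M\otimes Q)$. *)

From HB Require Import structures.
From mathcomp Require Import all_boot all_order all_algebra.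
From mathcomp Require Import boolp.
From mathcomp Require Import ring fraction.
From Stdlib Require List.
Set Implicit Arguments. Unset Strict Implicit. Unset Printing Implicit Defensive.
Import GRing.Theory.
Local Open Scope ring_scope.

Notation "x %:F" := (@FracField.tofrac _ x).

Definition is_ideal (R : comNzRingType) (I : R -> Prop) : Prop :=
  [/\ I 0, (forall x y, I x -> I y -> I (x + y)) & (forall r x, I x -> I (r * x))].

Definition is_proper_ideal (R : comNzRingType) (I : R -> Prop) : Prop :=
  is_ideal I /\ ~ I 1.

Definition is_maximal_ideal (R : comNzRingType) (I : R -> Prop) : Prop :=
  is_proper_ideal I /\
  forall J : R -> Prop, is_ideal J -> (forall x, I x -> J x) ->
    (forall x, J x -> I x) \/ J 1.

Definition is_prime_ideal (R : comNzRingType) (P : R -> Prop) : Prop :=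
  is_proper_ideal P /\ forall a b, P (a * b) -> P a \/ P b.

Definition same_ideal (R : comNzRingType) (I J : R -> Prop) : Prop :=
  forall x, I x <-> J x.

Record maxideal (R : comNzRingType) := MaxIdeal {
  mid :> R -> Prop;
  mid_max : is_maximal_ideal mid }.

Lemma maxideal_prime (R : comNzRingType) (m : maxideal R) : is_prime_ideal m.
Proof.
case: m => m [[[m0 mD mM] m1] mmax] /=; split => //.
move=> a b mab; case: (pselect (m a)) => ma; first by left.
right.
pose J := fun x => exists y r, m y /\ x = y + r * a.
have Jid : is_ideal J.
  split.
  - by exists 0, 0; split => //; rewrite mul0r addr0.
  - move=> x z [y1 [r1 [my1 ->]]] [y2 [r2 [my2 ->]]].
    exists (y1 + y2), (r1 + r2); split; first exact: mD.
    by rewrite mulrDl addrACA.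
  - move=> r x [y [r' [my ->]]]; exists (r * y), (r * r'); split; first exact: mM.
    by rewrite mulrDr mulrA.
have sub : forall x, m x -> J x by move=> x mx; exists x, 0; rewrite mul0r addr0.
case: (mmax J Jid sub) => [JI|J1].
  by exfalso; apply: ma; apply: JI; exists 0, 1; rewrite add0r mul1r.
case: J1 => y [r [my e]].
have -> : b = b * y + r * (a * b).
  by rewrite -[b in LHS]mulr1 e; ring.
by apply: mD; apply: mM.
Qed.

Definition loc_pred (R : idomainType) (m : maxideal R) : {pred {fraction R}} :=
  fun x => `[< exists a s, ~ m s /\ x = a%:F / s%:F >].

Lemma loc_subring_closed (R : idomainType) (m : maxideal R) :
  subring_closed (loc_pred m).
Proof.
have [[[m0 _ _] m1] mP] := maxideal_prime m.
have nz : forall s : R, ~ m s -> (s%:F : {fraction R}) != 0.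
  by move=> s ms; rewrite tofrac_eq0; apply/eqP => s0; apply: ms; rewrite s0.
have ms2 : forall s t, ~ m s -> ~ m t -> ~ m (s * t).
  by move=> s t ms mt /mP [].
split.
- apply/asboolP; exists 1, 1; split => //; by rewrite divr1.
- move=> x y /asboolP [a [s [ms ->]]] /asboolP [b [t [mt ->]]].
  apply/asboolP; exists (a * t - b * s), (s * t); split; first exact: ms2.
  rewrite -mulNr addf_div ?nz // !tofracB !tofracM mulNr.
  by rewrite [(b%:F * s%:F)]mulrC.
- move=> x y /asboolP [a [s [ms ->]]] /asboolP [b [t [mt ->]]].
  apply/asboolP; exists (a * b), (s * t); split; first exact: ms2.
  by rewrite mulf_div !tofracM.
Qed.

HB.instance Definition _ (R : idomainType) (m : maxideal R) :=
  GRing.isSubringClosed.Build _ (loc_pred m) (loc_subring_closed m).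

Definition localization (R : idomainType) (m : maxideal R) :=
  {x : {fraction R} | x \in loc_pred m}.

HB.instance Definition _ (R : idomainType) (m : maxideal R) :=
  [isSub for (@sval _ _ : localization m -> _)].
HB.instance Definition _ (R : idomainType) (m : maxideal R) :=
  [Choice of localization m by <:].
HB.instance Definition _ (R : idomainType) (m : maxideal R) :=
  [SubChoice_isSubComNzRing of localization m by <:].

Lemma loc_of_proof (R : idomainType) (m : maxideal R) (r : R) :
  (r%:F : {fraction R}) \in loc_pred m.
Proof.
have [[[_ _ _] m1] _] := maxideal_prime m.
by apply/asboolP; exists r, 1; split => //; rewrite tofrac1 divr1.
Qed.

Definition loc_of (R : idomainType) (m : maxideal R) (r : R) : localization m :=
  exist _ (r%:F) (loc_of_proof m r).

Definition finitely_generated (D : comNzRingType) (M : lmodType D) : Prop :=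
  exists gs : seq M, forall x : M,
    exists c : 'I_(size gs) -> D, x = \sum_(i < size gs) c i *: gs`_i.

Definition free_module (D : comNzRingType) (M : lmodType D) : Prop :=
  exists (I : Type) (b : I -> M),
    (forall x : M, exists (s : seq I) (c : I -> D), x = \sum_(i <- s) c i *: b i) /\
    (forall (s : seq I) (c : I -> D), List.NoDup s ->
        \sum_(i <- s) c i *: b i = 0 -> forall i, List.In i s -> c i = 0).

(* M is torsion-free: the map M -> M (x) Q = S^{-1} M (S = D \ {0}),
   x |-> x/1, is injective; x/1 = 0 in S^{-1}M iff d x = 0 for some d != 0. *)
Definition torsion_free (D : comNzRingType) (M : lmodType D) : Prop :=
  forall (d : D) (x : M), d != 0 -> d *: x = 0 -> x = 0.

(* M has rank n, i.e. dim_Q (M (x) Q) = n.  A Q-basis of M (x) Q = S^{-1}M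
   can always be taken of the form v_1/1, ..., v_n/1 (rescaling by units);
   v_i/1 are Q-independent iff the v_i are D-independent in M, and they
   span S^{-1}M iff every x in M has a nonzero multiple in the D-span. *)
Definition has_rank (D : comNzRingType) (M : lmodType D) (n : nat) : Prop :=
  exists v : 'I_n -> M,
    (forall c : 'I_n -> D, \sum_(i < n) c i *: v i = 0 -> forall i, c i = 0) /\
    (forall x : M, exists (d : D) (c : 'I_n -> D),
        d != 0 /\ d *: x = \sum_(i < n) c i *: v i).

(* N_m ~= X as R_m-modules, for an R-module N and an R_m-module X.
   Such an isomorphism is the same as an R-linear map f : N -> X (X viewed
   as an R-module via R -> R_m) whose induced R_m-linear map
   N_m -> X, x/s |-> s^{-1} f(x), is bijective: injective iff
   ker f = {x | s x = 0 for some s not in m}, surjective iff every y in X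
   is of the form s^{-1} f(x). *)
Definition localization_iso (R : idomainType) (m : maxideal R)
    (N : lmodType R) (X : lmodType (localization m)) : Prop :=
  exists f : N -> X,
    [/\ (forall x y, f (x + y) = f x + f y),
        (forall (r : R) x, f (r *: x) = loc_of m r *: f x),
        (forall x, f x = 0 <-> exists s : R, ~ m s /\ s *: x = 0) &
        (forall y : X, exists (x : N) (s : R), ~ m s /\ loc_of m s *: y = f x)].

Definition h_local (R : idomainType) : Prop :=
  (forall x : R, x != 0 ->
     exists L : seq (R -> Prop), forall m : maxideal R, m x ->
       exists2 P, List.In P L & same_ideal m P) /\
  (forall P : R -> Prop, is_prime_ideal P -> (exists x, x != 0 /\ P x) ->
     (exists m : maxideal R, forall x, P x -> m x) /\
     (forall m1 m2 : maxideal R, (forall x, P x -> m1 x) -> (forall x, P x -> m2 x) ->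
        same_ideal m1 m2)).
Arguments localization_iso {R} m N X.

(* (i) -> (ii): if v_1, ..., v_n is a maximal independent family of N, some
   t != 0 maps the finitely many generators of N, hence N, into the free module
   F = R v_1 + ... + R v_n.  At every maximal ideal not containing t, i.e. at all
   but finitely many since R is h-local, N_m = F_m is free.

   (ii) -> (i): a maximal independent family of X(m), taken to be a basis when
   X(m) is free, embeds X(m) into K^n (K the fraction field); let N be the
   intersection of all these images.  It contains R^n and lies in K^n, so it is
   torsion-free of rank n.  For y in X(m) with common denominator t, only the
   finitely many maximal ideals m' containing t obstruct s y lying in N, and
   since (R \ m)(R \ m') meets tR for m' <> m, a suitable s outside m clears
   them all: thus N_m = X(m).  Finally the standard basis together with such
   multiples of generators of the finitely many non-free X(m) generate N: for
   each x in N, the ideal of those r with r x in their span lies in no maximal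
   ideal. *)

From HB Require Import structures.
From mathcomp Require Import all_boot all_order all_algebra.
From mathcomp Require Import boolp ring fraction generic_quotient.
From mathcomp Require classical_sets.
From Stdlib Require List.
Set Implicit Arguments. Unset Strict Implicit. Unset Printing Implicit Defensive.
Import GRing.Theory.
Local Open Scope ring_scope.

(** * Ideals and Krull's lemma *)

Section Ideals.
Variable R : comNzRingType.
Implicit Types (m : maxideal R) (I J P S : R -> Prop).

Lemma maxideal_ext m1 m2 : same_ideal m1 m2 -> m1 = m2.
Proof.
case: m1 m2 => [m1 h1] [m2 h2] /= e.
have E : m1 = m2 by apply: funext => x; apply: propext; exact: e.
by subst m2; congr MaxIdeal; exact: Prop_irrelevance.
Qed.

Lemma mid0 m : m 0.
Proof. by have [[[]]] := maxideal_prime m. Qed.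

Lemma mid_not1 m : ~ m 1.
Proof. by have [[]] := maxideal_prime m. Qed.

Lemma mid_notM m s t : ~ m s -> ~ m t -> ~ m (s * t).
Proof. by move=> ms mt; have [_ mP] := maxideal_prime m; case/mP. Qed.

Lemma mid_not_prod m (I : Type) (r : seq I) (P : pred I) (F : I -> R) :
  (forall i, P i -> ~ m (F i)) -> ~ m (\prod_(i <- r | P i) F i).
Proof.
by move=> mF; apply: (big_ind (fun x => ~ m x)); [exact: mid_not1 | exact: mid_notM |].
Qed.

Lemma mid_not_neq0 m s : ~ m s -> s != 0.
Proof. by move=> ms; apply/eqP => s0; apply: ms; rewrite s0; exact: mid0. Qed.

Lemma is_ideal_adjoin P a : is_ideal P ->
  is_ideal (fun x => exists p r, P p /\ x = p + r * a).
Proof.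
move=> [P0 PD PM]; split.
- by exists 0, 0; rewrite mul0r addr0.
- move=> _ _ [p1 [r1 [Pp1 ->]]] [p2 [r2 [Pp2 ->]]].
  exists (p1 + p2), (r1 + r2); split; first exact: PD.
  by rewrite mulrDl addrACA.
- move=> r _ [p [r' [Pp ->]]]; exists (r * p), (r * r'); split; first exact: PM.
  by rewrite mulrDr mulrA.
Qed.

Lemma is_ideal_chain_union (A : Type) (F : A -> Prop) (J : A -> R -> Prop) :
  (exists a, F a) -> (forall a, F a -> is_ideal (J a)) ->
  (forall a b, F a -> F b -> (forall x, J a x -> J b x) \/ (forall x, J b x -> J a x)) ->
  is_ideal (fun x => exists2 a, F a & J a x).
Proof.
move=> [a0 Fa0] Jid Jtot; split.
- by exists a0 => //; case: (Jid _ Fa0).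
- move=> x y [a Fa Jax] [b Fb Jby].
  have [Jab|Jba] := Jtot _ _ Fa Fb.
  + by exists b => //; case: (Jid _ Fb) => _ JD _; apply: JD => //; exact: Jab.
  + by exists a => //; case: (Jid _ Fa) => _ JD _; apply: JD => //; exact: Jba.
- by move=> r x [a Fa Jax]; exists a => //; case: (Jid _ Fa) => _ _ JM; exact: JM.
Qed.

Definition maximal_avoiding S P : Prop :=
  [/\ is_ideal P, (forall x, P x -> ~ S x) &
      forall J, is_ideal J -> (forall x, P x -> J x) -> (forall x, J x -> ~ S x) ->
        forall x, J x -> P x].

Lemma exists_maximal_avoiding I S : is_ideal I -> (forall x, I x -> ~ S x) ->
  exists2 P, (forall x, I x -> P x) & maximal_avoiding S P.
Proof.
move=> Iid IS.
pose T := {J | [/\ is_ideal J, (forall x, I x -> J x) & (forall x, J x -> ~ S x)]}.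
pose I0 : T := exist _ I (And3 Iid (fun x Ix => Ix) IS).
pose sub := fun J1 J2 : T => `[< forall x, sval J1 x -> sval J2 x >].
have [||F Ftot|[P [Pid IP PS]] Pmax] := @classical_sets.ZL_preorder T I0 sub.
- by move=> J; apply/asboolP.
- by move=> J1 J2 J3 /asboolP J12 /asboolP J23; apply/asboolP => x /J12/J23.
- have [Fne|nF] := pselect (exists J : T, F J); last first.
    by exists I0 => J FJ; case: nF; exists J.
  pose U x := exists2 J : T, F J & sval J x.
  have Uid : is_ideal U.
    apply: is_ideal_chain_union => // [J _|J1 J2 FJ1 FJ2]; first by case: (svalP J).
    by case: (Ftot _ _ FJ1 FJ2) => /asboolP; [left|right].
  have IU x : I x -> U x.
    by move=> Ix; case: Fne => J FJ; exists J => //; case: (svalP J) => _ IJ _; exact: IJ.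
  have US x : U x -> ~ S x by case=> J _; case: (svalP J) => _ _; apply.
  by exists (exist _ U (And3 Uid IU US)) => J FJ; apply/asboolP => x Jx; exists J.
- exists P => //; split => // J Jid PJ JS x Jx.
  have IJ y : I y -> J y by move=> /IP /PJ.
  have := Pmax (exist _ J (And3 Jid IJ JS)).
  by move=> /(_ (asboolT PJ)) /asboolP; apply.
Qed.

Lemma maximal_avoiding_prime P S : S 1 -> (forall a b, S a -> S b -> S (a * b)) ->
  maximal_avoiding S P -> is_prime_ideal P.
Proof.
move=> S1 SM [Pid PS Pmax]; split; first by split => // /PS.
have [P0 PD PM] := Pid.
have meets c : ~ P c -> exists p r, P p /\ S (p + r * c).
  move=> Pc; apply: contrapT => avoid; apply: Pc.
  apply: (Pmax _ (is_ideal_adjoin c Pid)); last by exists 0, 1; rewrite add0r mul1r.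
    by move=> x Px; exists x, 0; rewrite mul0r addr0.
  by move=> _ [p [r [Pp ->]]] Sx; apply: avoid; exists p, r.
move=> a b Pab; apply: contrapT => /not_orP [Pa Pb].
have [p1 [r1 [Pp1 S1a]]] := meets a Pa; have [p2 [r2 [Pp2 S2b]]] := meets b Pb.
apply: (PS _ _ (SM _ _ S1a S2b)).
have -> : (p1 + r1 * a) * (p2 + r2 * b) =
    (p1 * (p2 + r2 * b) + (r1 * a) * p2) + (r1 * r2) * (a * b) by ring.
apply: (PD); last exact: PM.
by apply: PD; [rewrite mulrC|]; exact: PM.
Qed.

Lemma prime_ideal_avoiding I S : is_ideal I -> S 1 ->
  (forall a b, S a -> S b -> S (a * b)) -> (forall x, I x -> ~ S x) ->
  exists P, [/\ is_prime_ideal P, (forall x, I x -> P x) & (forall x, P x -> ~ S x)].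
Proof.
move=> Iid S1 SM IS; have [P IP Pmax] := exists_maximal_avoiding Iid IS.
by exists P; split => //; [exact: maximal_avoiding_prime Pmax | case: Pmax].
Qed.

Lemma ideal_sub_maxideal J : is_ideal J -> ~ J 1 -> exists m, forall x, J x -> m x.
Proof.
move=> Jid J1; have [|P JP [Pid P1 Pmax]] := exists_maximal_avoiding (S := eq 1) Jid.
  by move=> x Jx x1; apply: J1; rewrite x1.
have Pmaxideal : is_maximal_ideal P.
  split; first by split => // /P1.
  move=> K Kid PK; have [K1|K1] := pselect (K 1); [by right | left].
  by apply: Pmax => // x Kx x1; apply: K1; rewrite x1.
by exists (MaxIdeal Pmaxideal).
Qed.

Lemma ideal_full J : is_ideal J -> (forall m, exists s, J s /\ ~ m s) -> J 1.
Proof.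
move=> Jid Jm; apply: contrapT => /(ideal_sub_maxideal Jid) [m Jsubm].
by have [s [Js ms]] := Jm m; apply/ms/Jsubm.
Qed.

Lemma maxideals_of_preds (L : seq (R -> Prop)) : exists ms : seq (maxideal R),
  forall m, (exists2 P, List.In P L & same_ideal m P) -> List.In m ms.
Proof.
elim: L => [|P L [ms Lms]]; first by exists [::] => m [P []].
have [[m0 m0P]|nP] := pselect (exists m0 : maxideal R, same_ideal m0 P).
  exists (m0 :: ms) => m [Q [<-|QL] mQ]; last by right; apply: Lms; exists Q.
  by left; apply: maxideal_ext => x; rewrite m0P mQ.
exists ms => m [Q [<-|QL] mQ]; first by case: nP; exists m.
by apply: Lms; exists Q.
Qed.

Lemma mid_not_common_multiple m (A : Type) (ms : seq A) (Q : A -> R -> Prop) :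
  (forall a s r, Q a s -> Q a (r * s)) ->
  (forall a, List.In a ms -> exists s, ~ m s /\ Q a s) ->
  exists s, ~ m s /\ forall a, List.In a ms -> Q a s.
Proof.
move=> QM; elim: ms => [|a ms IH] msQ; first by exists 1; split => //; exact: mid_not1.
have [s [ms_s sQ]] := IH (fun b bms => msQ b (or_intror bms)).
have [s' [ms_s' s'Q]] := msQ a (or_introl erefl).
exists (s * s'); split; first exact: mid_notM.
by move=> b [<-|/sQ bs]; [exact: QM | rewrite mulrC; exact: QM].
Qed.

End Ideals.

(** * h-local domains *)

Section HLocal.
Variable R : idomainType.
Hypothesis hR : h_local R.
Implicit Types m : maxideal R.

Lemma h_local_finite_maxideals (t : R) : t != 0 ->
  exists ms, forall m, m t -> List.In m ms.
Proof.
move=> t0; have [L Lt] := hR.1 t t0; have [ms Lms] := maxideals_of_preds L.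
by exists ms => m /Lt [P LP mP]; apply: Lms; exists P.
Qed.

(* Otherwise a prime ideal containing [t] and avoiding (R \ m)(R \ m') would lie
   in both [m] and [m']. *)
Lemma h_local_divides_compl_mul m m' (t : R) : m <> m' -> t != 0 ->
  exists s u r, [/\ ~ m s, ~ m' u & s * u = t * r].
Proof.
move=> mm' t0; apply: contrapT => tS.
pose I x := exists r, x = t * r.
pose S x := exists s u, [/\ ~ m s, ~ m' u & x = s * u].
have Iid : is_ideal I.
  split; first by exists 0; rewrite mulr0.
  - by move=> _ _ [r1 ->] [r2 ->]; exists (r1 + r2); rewrite mulrDr.
  - by move=> r _ [r1 ->]; exists (r * r1); rewrite mulrCA.
have S1 : S 1 by exists 1, 1; split; rewrite ?mulr1 //; exact: mid_not1.
have SM a b : S a -> S b -> S (a * b).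
  move=> [s1 [u1 [ms1 mu1 ->]]] [s2 [u2 [ms2 mu2 ->]]].
  by exists (s1 * s2), (u1 * u2); rewrite mulrACA; split => //; exact: mid_notM.
have IS x : I x -> ~ S x by move=> [r ->] [s [u [ms mu e]]]; apply: tS; exists s, u, r.
have [P [Pprime IP PS]] := prime_ideal_avoiding Iid S1 SM IS.
have Pm x : P x -> m x.
  move=> Px; apply: contrapT => mx; apply: (PS x Px).
  by exists x, 1; split; rewrite ?mulr1 //; exact: mid_not1.
have Pm' x : P x -> m' x.
  move=> Px; apply: contrapT => mx; apply: (PS x Px).
  by exists 1, x; split; rewrite ?mul1r //; exact: mid_not1.
have Pnz : exists x, x != 0 /\ P x.
  by exists t; split => //; apply: IP; exists 1; rewrite mulr1.
by apply: mm'; apply: maxideal_ext; apply: (hR.2 P Pprime Pnz).2.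
Qed.

End HLocal.

(** * Denominators and localizations *)

Lemma common_denominator (R A : comNzRingType) (phi : {rmorphism R -> A})
    (S : R -> Prop) k (c : 'I_k -> A) :
  S 1 -> (forall s t, S s -> S t -> S (s * t)) ->
  (forall i, exists s a, S s /\ phi s * c i = phi a) ->
  exists s (a : 'I_k -> R), S s /\ forall i, phi s * c i = phi (a i).
Proof.
move=> S1 SM cS; have {}cS i : exists p : R * R, S p.2 /\ phi p.2 * c i = phi p.1.
  by have [s [a sa]] := cS i; exists (a, s).
pose p i := projT1 (cid (cS i)).
have pS i : S (p i).2 /\ phi (p i).2 * c i = phi (p i).1 by rewrite /p; case: cid.
exists (\prod_i (p i).2), (fun i => (p i).1 * \prod_(j | j != i) (p j).2); split.
  by apply: (big_ind S) => // i _; case: (pS i).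
by move=> i; rewrite (bigD1 i) //= !rmorphM mulrAC (pS i).2.
Qed.

Lemma frac_denominator (R : idomainType) (x : {fraction R}) :
  exists s a, s != 0 /\ s%:F * x = a%:F.
Proof.
elim/quotW: x => r; have r2 := denom_ratioP r.
have -> : (\pi_{fraction R} r)%qT = r.1%:F / r.2%:F.
  apply: (canRL (mulfK _)); first by rewrite tofrac_eq0.
  rewrite /FracField.tofrac -!lock.
  apply: etrans (esym (FracField.pi_mul r (Ratio r.2 1))) _.
  apply/eqmodP; rewrite /= FracField.equivfE /FracField.mulf.
  by rewrite !numden_Ratio ?mulr1 ?mul1r ?oner_neq0 // mulrC.
by exists r.2, r.1; rewrite mulrC divfK // tofrac_eq0.
Qed.

Lemma frac_common_denominator (R : idomainType) k (c : 'I_k -> {fraction R}) :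
  exists t (a : 'I_k -> R), t != 0 /\ forall i, t%:F * c i = (a i)%:F.
Proof.
apply: (common_denominator (S := fun s => s != 0)) => [|s t|i]; rewrite ?oner_neq0 //.
  exact: mulf_neq0.
exact: frac_denominator.
Qed.

Lemma loc_of_is_zmod_morphism (R : idomainType) (m : maxideal R) :
  zmod_morphism (loc_of m).
Proof. by move=> a b; apply: val_inj; rewrite /= rmorphB. Qed.

Lemma loc_of_is_monoid_morphism (R : idomainType) (m : maxideal R) :
  monoid_morphism (loc_of m).
Proof. by split => [|a b]; apply: val_inj; rewrite /= ?rmorph1 ?rmorphM. Qed.

HB.instance Definition _ (R : idomainType) (m : maxideal R) :=
  GRing.isZmodMorphism.Build R (localization m) (loc_of m) (loc_of_is_zmod_morphism m).
HB.instance Definition _ (R : idomainType) (m : maxideal R) :=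
  GRing.isMonoidMorphism.Build R (localization m) (loc_of m) (loc_of_is_monoid_morphism m).

Section Localization.
Variables (R : idomainType) (m : maxideal R).
Local Notation D := (localization m).
Local Notation loc := (loc_of m).

Lemma val_loc_of r : val (loc r) = r%:F.
Proof. by []. Qed.

Lemma val_loc_eq0 (x : D) : (val x == 0) = (x == 0).
Proof. by rewrite -(inj_eq val_inj) rmorph0. Qed.

Lemma loc_predP (x : {fraction R}) :
  x \in loc_pred m <-> exists a s, ~ m s /\ x = a%:F / s%:F.
Proof. by split => [/asboolP|?]; last apply/asboolP. Qed.

Lemma loc_denominator (x : D) : exists s a, ~ m s /\ loc s * x = loc a.
Proof.
case: x => x xm; have /loc_predP [a [s [ms xE]]] := xm; exists s, a; split => //.
by apply: val_inj; rewrite /= xE mulrC divfK // tofrac_eq0 (mid_not_neq0 ms).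
Qed.

Lemma loc_common_denominator k (c : 'I_k -> D) :
  exists s (a : 'I_k -> R), ~ m s /\ forall i, loc s * c i = loc (a i).
Proof.
apply: (common_denominator (S := fun s => ~ m s)) => [|s t|i].
- exact: mid_not1.
- exact: mid_notM.
- exact: loc_denominator.
Qed.

Lemma loc_of_invertible s : ~ m s -> exists w : D, w * loc s = 1.
Proof.
move=> ms; have w_loc : 1%:F / s%:F \in loc_pred m by apply/loc_predP; exists 1, s.
exists (Sub (1%:F / s%:F) w_loc : D); apply: val_inj => /=.
by rewrite tofrac1 mul1r mulVf // tofrac_eq0 (mid_not_neq0 ms).
Qed.

Lemma loc_of_mulI s (x y : D) : ~ m s -> loc s * x = loc s * y -> x = y.
Proof.
move=> /loc_of_invertible [w ws] e.
by rewrite -[x]mul1r -[y]mul1r -ws -!mulrA e.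
Qed.

End Localization.

(** * Spans, independence and bases *)

Lemma InP (T : eqType) (x : T) (s : seq T) : reflect (List.In x s) (x \in s).
Proof.
elim: s => [|y s IH]; first by right.
rewrite in_cons; apply: (iffP orP) => [[/eqP->|/IH]|[->|/IH->]];
  by [left | right | rewrite eqxx | rewrite orbT].
Qed.

Lemma NoDupP (T : eqType) (s : seq T) : reflect (List.NoDup s) (uniq s).
Proof.
elim: s => [|y s IH]; first by left; constructor.
rewrite cons_uniq; apply: (iffP andP) => [[/InP ys /IH]|/List.NoDup_cons_iff [ys /IH]].
  by constructor.
by split => //; apply/InP.
Qed.

Lemma mem_flatten_map (A : Type) (T : eqType) (f : A -> seq T) (l : seq A) a z :
  List.In a l -> z \in f a -> z \in flatten (map f l).
Proof.
elim: l => //= b l IH [<-|al] za; rewrite mem_cat ?za //.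
by rewrite IH ?orbT.
Qed.

Section AdditiveFun.
Variables (U V : zmodType) (f : U -> V).
Hypothesis fD : {morph f : x y / x + y}.

Lemma addf0 : f 0 = 0.
Proof. by apply: (@addrI _ (f 0)); rewrite -fD !addr0. Qed.

Lemma addfN : {morph f : x / - x}.
Proof. by move=> x; apply: (@addrI _ (f x)); rewrite -fD !subrr addf0. Qed.

Lemma addf_sum (I : Type) (r : seq I) (P : pred I) (F : I -> U) :
  f (\sum_(i <- r | P i) F i) = \sum_(i <- r | P i) f (F i).
Proof. exact: (big_morph f fD addf0). Qed.

End AdditiveFun.

Section Spans.
Variables (D : comNzRingType) (M : lmodType D).

Definition in_span k (w : 'I_k -> M) (x : M) : Prop :=
  exists c : 'I_k -> D, x = \sum_(i < k) c i *: w i.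

Definition spans k (w : 'I_k -> M) : Prop := forall x, in_span w x.

Definition lin_indep k (w : 'I_k -> M) : Prop :=
  forall c : 'I_k -> D, \sum_(i < k) c i *: w i = 0 -> forall i, c i = 0.

Definition rationally_spans k (w : 'I_k -> M) : Prop :=
  forall x, exists (d : D) (c : 'I_k -> D), d != 0 /\ d *: x = \sum_(i < k) c i *: w i.

Variables (k : nat) (w : 'I_k -> M).

Lemma in_span0 : in_span w 0.
Proof. by exists (fun _ => 0); rewrite big1 // => i _; rewrite scale0r. Qed.

Lemma in_spanD x y : in_span w x -> in_span w y -> in_span w (x + y).
Proof.
move=> [c ->] [c' ->]; exists (fun i => c i + c' i).
by rewrite -big_split; apply: eq_bigr => i _; rewrite scalerDl.
Qed.

Lemma in_spanZ a x : in_span w x -> in_span w (a *: x).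
Proof.
move=> [c ->]; exists (fun i => a * c i).
by rewrite scaler_sumr; apply: eq_bigr => i _; rewrite scalerA.
Qed.

Lemma in_span_sum (I : Type) (r : seq I) (P : pred I) (F : I -> M) :
  (forall i, P i -> in_span w (F i)) -> in_span w (\sum_(i <- r | P i) F i).
Proof. by move=> FP; apply: big_ind => //; [exact: in_span0 | exact: in_spanD]. Qed.

Lemma in_span_gen i : in_span w (w i).
Proof.
exists (fun j => (j == i)%:R); rewrite (bigD1 i) //= eqxx scale1r big1 ?addr0 //.
by move=> j /negbTE ->; rewrite scale0r.
Qed.

Lemma is_ideal_span_conductor x : is_ideal (fun r => in_span w (r *: x)).
Proof.
split; first by rewrite scale0r; exact: in_span0.
- by move=> a b; rewrite scalerDl; exact: in_spanD.
- by move=> r a; rewrite -scalerA; exact: in_spanZ.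
Qed.

Lemma spans_rationally : spans w -> rationally_spans w.
Proof. by move=> wspan x; have [c ->] := wspan x; exists 1, c; rewrite scale1r oner_neq0. Qed.

Lemma free_module_of_basis : lin_indep w -> spans w -> free_module M.
Proof.
move=> wind wspan; exists 'I_k, w; split.
  by move=> x; have [c ->] := wspan x; exists (index_enum 'I_k), c.
move=> s c /NoDupP s_uniq sc0 i /InP si.
pose c' j := if j \in s then c j else 0.
have c'0 : \sum_j c' j *: w j = 0.
  rewrite -[RHS]sc0 (big_uniq _ s_uniq) [RHS]big_mkcond; apply: eq_bigr => j _.
  by rewrite /c'; case: (j \in s); rewrite ?scale0r.
by have := wind c' c'0 i; rewrite /c' si.
Qed.

End Spans.

Lemma in_span_nth (D : comNzRingType) (M : lmodType D) (gs : seq M) g :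
  g \in gs -> in_span (fun i : 'I_(size gs) => gs`_i) g.
Proof.
move=> gs_g; have ig : (index g gs < size gs)%N by rewrite index_mem.
by have := in_span_gen (fun i : 'I_(size gs) => gs`_i) (Ordinal ig); rewrite /= nth_index.
Qed.

Section FreeFamily.
Variables (D : comNzRingType) (M : lmodType D) (I : eqType) (b : I -> M).
Variable S : seq I.
Local Notation bS := (fun p : 'I_(size S) => b (tnth (in_tuple S) p)).

Lemma lin_indep_free_family :
  (forall (s : seq I) (c : I -> D), List.NoDup s ->
     \sum_(i <- s) c i *: b i = 0 -> forall i, List.In i s -> c i = 0) ->
  uniq S -> lin_indep bS.
Proof.
move=> bind S_uniq a a0 p.
have S_inj : injective (tnth (in_tuple S)) by apply/tuple_uniqP.
pose c i := \sum_(q | tnth (in_tuple S) q == i) a q.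
have cS q : c (tnth (in_tuple S) q) = a q.
  by rewrite /c (big_pred1 q) // => q'; rewrite /= (inj_eq S_inj).
have := bind S c (elimT (NoDupP S) S_uniq) _ (tnth (in_tuple S) p).
rewrite cS; apply; last by apply/InP; exact: mem_tnth.
by rewrite big_tnth -[RHS]a0; apply: eq_bigr => q _; rewrite cS.
Qed.

Lemma spans_free_family :
  (forall x, exists (s : seq I) (c : I -> D), x = \sum_(i <- s) c i *: b i) ->
  (forall i, i \in S) -> spans bS.
Proof.
move=> bspan S_full x; have [s [c ->]] := bspan x.
apply: in_span_sum => i _; apply: in_spanZ.
have iS : (index i S < size S)%N by rewrite index_mem.
have := in_span_gen bS (Ordinal iS).
by rewrite (tnth_nth i) /= nth_index.
Qed.

End FreeFamily.

(** * Coordinates over the fraction field *)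

Lemma lin_indep_rV_leq (K : fieldType) k n (u : 'I_k -> 'rV[K]_n) :
  lin_indep u -> (k <= n)%N.
Proof.
move=> uind; pose A := \matrix_p u p.
apply: leq_trans (rank_leq_col A); rewrite row_leq_rank; apply/inj_row_free => q qA0.
apply/rowP => p; rewrite mxE; apply: uind p; rewrite -[RHS]qA0 mulmx_sum_row.
by apply: eq_bigr => p' _; rewrite rowK.
Qed.

Section Coordinates.
Variables (R : idomainType) (m : maxideal R) (n : nat) (X : lmodType (localization m)).
Hypothesis tfX : torsion_free X.
Variable v : 'I_n -> X.
Hypotheses (vind : lin_indep v) (vspan : rationally_spans v).
Local Notation D := (localization m).
Local Notation K := {fraction R}.

Lemma rationally_spans_pair x : exists p : D * ('I_n -> D),
  p.1 != 0 /\ p.1 *: x = \sum_i p.2 i *: v i.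
Proof. by have [d [c dc]] := vspan x; exists (d, c). Qed.

(* The coordinates of [x] in the [K]-vector space [X (x) K] with basis [v]. *)
Definition coords x : 'rV[K]_n :=
  let p := projT1 (cid (rationally_spans_pair x)) in \row_j (val (p.2 j) / val p.1).

Lemma coordsE x d c : d != 0 -> d *: x = \sum_i c i *: v i ->
  coords x = \row_j (val (c j) / val d).
Proof.
rewrite /coords; case: cid => -[d' c'] /= [d'0 d'x] d0 dx.
have dc' j : d' * c j = d * c' j.
  apply/eqP; rewrite -subr_eq0; apply/eqP.
  apply: (vind (c := fun i => d' * c i - d * c' i)).
  under eq_bigr => i _ do rewrite scalerBl -!scalerA.
  by rewrite sumrB -!scaler_sumr -dx -d'x !scalerA mulrC subrr.
apply/rowP => j; rewrite !mxE; apply/eqP.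
rewrite eqr_div ?val_loc_eq0 // mulrC [X in _ == X]mulrC.
by have := congr1 val (dc' j); rewrite !rmorphM => ->.
Qed.

Lemma coordsD : {morph coords : x y / x + y}.
Proof.
move=> x y; have [[dx cx] [/= dx0 dxx]] := rationally_spans_pair x.
have [[dy cy] [/= dy0 dyy]] := rationally_spans_pair y.
rewrite (coordsE dx0 dxx) (coordsE dy0 dyy).
rewrite (@coordsE _ (dx * dy) (fun i => dy * cx i + dx * cy i)); last 2 first.
- by rewrite mulf_neq0.
- rewrite scalerDr {1}mulrC -!scalerA dxx dyy !scaler_sumr -big_split.
  by apply: eq_bigr => i _; rewrite scalerDl !scalerA.
apply/rowP => j; rewrite !mxE !rmorphM rmorphD !rmorphM addf_div ?val_loc_eq0 //.
by rewrite (mulrC (val (cx j))) (mulrC (val (cy j))).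
Qed.

Lemma coordsZ a x : coords (a *: x) = val a *: coords x.
Proof.
have [[d c] [/= d0 dx]] := rationally_spans_pair x.
rewrite (coordsE d0 dx) (@coordsE _ d (fun i => a * c i)) //.
  by apply/rowP => j; rewrite !mxE rmorphM mulrA.
rewrite scalerA mulrC -scalerA dx scaler_sumr.
by apply: eq_bigr => i _; rewrite scalerA.
Qed.

Lemma coords_comb (c : 'I_n -> D) : coords (\sum_i c i *: v i) = \row_j val (c j).
Proof.
rewrite (@coordsE _ 1 c) ?oner_neq0 ?scale1r //.
by apply/rowP => j; rewrite !mxE rmorph1 divr1.
Qed.

Lemma coords_inj : injective coords.
Proof.
suff coords_eq0 x : coords x = 0 -> x = 0.
  by move=> x y e; apply/subr0_eq/coords_eq0; rewrite coordsD (addfN coordsD) e subrr.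
have [[d c] [/= d0 dx]] := rationally_spans_pair x.
rewrite (coordsE d0 dx) => /rowP c0; apply: (tfX d0); rewrite dx big1 // => i _.
have /eqP := c0 i; rewrite !mxE mulf_eq0 invr_eq0 !val_loc_eq0 (negbTE d0) orbF.
by move=> /eqP->; rewrite scale0r.
Qed.

Lemma lin_indep_size_leq k (u : 'I_k -> X) : lin_indep u -> (k <= n)%N.
Proof.
move=> uind; apply: (@lin_indep_rV_leq K k n (coords \o u)) => q q0 p.
have [t [a [t0 ta]]] := frac_common_denominator q.
have : \sum_p loc_of m (a p) *: u p = 0.
  apply: coords_inj; rewrite (addf_sum coordsD) (addf0 coordsD).
  under eq_bigr => p' _ do rewrite coordsZ val_loc_of -ta -scalerA.
  by rewrite -scaler_sumr q0 scaler0.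
move=> /uind /(_ p) /(congr1 val); rewrite val_loc_of rmorph0 => /eqP.
rewrite tofrac_eq0 => /eqP ap0.
by have /eqP := ta p; rewrite ap0 rmorph0 mulf_eq0 tofrac_eq0 (negbTE t0) => /eqP.
Qed.

End Coordinates.

Section FreeOfRank.
Variables (R : idomainType) (m : maxideal R) (n : nat) (X : lmodType (localization m)).
Hypothesis tfX : torsion_free X.
Variable v : 'I_n -> X.
Hypotheses (vind : lin_indep v) (vspan : rationally_spans v).

Lemma basis_size k (w : 'I_k -> X) : lin_indep w -> spans w -> k = n.
Proof.
move=> wind wspan; apply/eqP; rewrite eqn_leq (lin_indep_size_leq tfX vind vspan wind).
exact: (lin_indep_size_leq tfX wind (spans_rationally wspan) vind).
Qed.

(* Distinct basis elements are independent, so there are at most [n] of them. *)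
Lemma free_module_finite_basis : free_module X ->
  exists k (w : 'I_k -> X), lin_indep w /\ spans w.
Proof.
case=> I [b [bspan bind]]; pose I' := {classic I}.
have bSind (S : seq I') : uniq S -> lin_indep (fun p => b (tnth (in_tuple S) p)).
  exact: (@lin_indep_free_family _ _ I' b S bind).
pose P k := `[< exists S : seq I', uniq S /\ size S = k >].
have P0 : exists k, P k by exists 0%N; apply/asboolP; exists [::].
have Pbound k : P k -> (k <= n)%N.
  move=> /asboolP [S [S_uniq <-]].
  exact: (lin_indep_size_leq tfX vind vspan (bSind S S_uniq)).
have [_ /asboolP [S [S_uniq <-]] Smax] := ex_maxnP P0 Pbound.
have S_full (i : I') : i \in S.
  apply: contraT => iS; have /Smax : P (size (i :: S)).
    by apply/asboolP; exists (i :: S); rewrite /= iS.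
  by rewrite ltnn.
exists (size S), (fun p => b (tnth (in_tuple S) p)); split; first exact: bSind.
exact: (@spans_free_family _ _ I' b S bspan S_full).
Qed.

Lemma free_module_basis : free_module X -> exists w : 'I_n -> X, lin_indep w /\ spans w.
Proof.
move=> /free_module_finite_basis [k [w [wind wspan]]].
by have kn := basis_size wind wspan; subst k; exists w.
Qed.

End FreeOfRank.

(** * Localizations of a finitely generated module *)

Lemma fg_rank_denominator (R : idomainType) (N : lmodType R) n (v : 'I_n -> N) :
  finitely_generated N -> rationally_spans v ->
  exists t, t != 0 /\ forall x, in_span v (t *: x).
Proof.
move=> [gs gsN] vspan.
have /boolp.choice [d dP] :
    forall k : 'I_(size gs), exists d, d != 0 /\ in_span v (d *: gs`_k).
  by move=> k; have [d [c [d0 dc]]] := vspan gs`_k; exists d; split => //; exists c.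
exists (\prod_k d k); split.
  by rewrite prodf_seq_neq0; apply/allP => k _; case: (dP k).
move=> x; have [c ->] := gsN x; rewrite scaler_sumr; apply: in_span_sum => k _.
rewrite scalerA mulrC -scalerA; apply: in_spanZ.
by rewrite (bigD1 k) //= mulrC -scalerA; apply: in_spanZ; case: (dP k).
Qed.

Section LocalizationIso.
Variables (R : idomainType) (m : maxideal R) (N : lmodType R) (X : lmodType (localization m)).
Variable f : N -> X.
Hypotheses (fD : {morph f : x y / x + y}) (fZ : forall r x, f (r *: x) = loc_of m r *: f x).
Variables (n : nat) (v : 'I_n -> N).

Lemma iso_lin_indep : (forall x, f x = 0 -> exists s, ~ m s /\ s *: x = 0) ->
  torsion_free N -> lin_indep v -> lin_indep (f \o v).
Proof.
move=> fker tfN vind c c0 i.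
have [s [a [ms sa]]] := loc_common_denominator c.
have : f (\sum_i a i *: v i) = 0.
  rewrite (addf_sum fD); under eq_bigr => j _ do rewrite fZ -sa -scalerA.
  by rewrite -scaler_sumr c0 scaler0.
move=> /fker [s' [ms' /(tfN _ _ (mid_not_neq0 ms'))]] /vind /(_ i) ai0.
by apply: (loc_of_mulI ms); rewrite sa ai0 rmorph0 mulr0.
Qed.

Lemma iso_spans (t : R) : ~ m t -> (forall x, in_span v (t *: x)) ->
  (forall y, exists x s, ~ m s /\ loc_of m s *: y = f x) -> spans (f \o v).
Proof.
move=> mt tv fsurj y; have [x [s [ms sy]]] := fsurj y.
have [c tx] := tv x; have [w wts] := loc_of_invertible (mid_notM mt ms).
exists (fun i => w * loc_of m (c i)).
rewrite -[y]scale1r -wts rmorphM -!scalerA sy -fZ tx (addf_sum fD) scaler_sumr.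
by apply: eq_bigr => i _; rewrite fZ scalerA.
Qed.

End LocalizationIso.

Lemma h_local_free_localizations (R : idomainType) (hR : h_local R) (N : lmodType R) n
    (X : forall m : maxideal R, lmodType (localization m)) :
  finitely_generated N -> torsion_free N -> has_rank N n ->
  (forall m, localization_iso m N (X m)) ->
  exists L : seq (R -> Prop), forall m : maxideal R,
    (forall P, List.In P L -> ~ same_ideal m P) -> free_module (X m).
Proof.
move=> Nfg tfN [v [vind vspan]] iso.
have [t [t0 tv]] := fg_rank_denominator Nfg vspan.
have [L Lt] := hR.1 t t0; exists L => m mL.
have mt : ~ m t by move=> /Lt [P LP mP]; exact: mL P LP mP.
have [f [fD fZ fker fsurj]] := iso m.
apply: (free_module_of_basis (w := f \o v)).
  by apply: iso_lin_indep => // x /fker.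
exact: iso_spans mt tv fsurj.
Qed.

(** * Gluing the local modules *)

Section Gluing.
Unset Implicit Arguments.
Context {R : idomainType} {n : nat} {X : forall m : maxideal R, lmodType (localization m)}.
Hypothesis hX : forall m, [/\ finitely_generated (X m), torsion_free (X m) & has_rank (X m) n].
Implicit Types m : maxideal R.
Local Notation K := {fraction R}.
Local Notation V := 'rV[K]_n.

Lemma frame_exists m : exists v : 'I_n -> X m,
  [/\ lin_indep v, rationally_spans v & free_module (X m) -> spans v].
Proof.
have [_ tfX [v [vind vspan]]] := hX m.
have [Xfree|nfree] := pselect (free_module (X m)); last by exists v; split => // /nfree.
have [w [wind wspan]] := free_module_basis tfX vind vspan Xfree.
by exists w; split => //; exact: spans_rationally.
Qed.

Definition frame m := projT1 (cid (frame_exists m)).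

Lemma frameP m :
  [/\ lin_indep (frame m), rationally_spans (frame m) & free_module (X m) -> spans (frame m)].
Proof. by rewrite /frame; case: cid. Qed.

Lemma frame_indep m : lin_indep (frame m). Proof. by case: (frameP m). Qed.
Lemma frame_rspans m : rationally_spans (frame m). Proof. by case: (frameP m). Qed.
Lemma frame_spans m : free_module (X m) -> spans (frame m). Proof. by case: (frameP m). Qed.

Definition emb m : X m -> V := coords (frame_rspans m).

Lemma embD m : {morph emb m : x y / x + y}.
Proof. exact: (coordsD (frame_indep m) (frame_rspans m)). Qed.

Lemma embZ m a (x : X m) : emb m (a *: x) = val a *: emb m x.
Proof. exact: (coordsZ (frame_indep m) (frame_rspans m)). Qed.

Lemma emb_inj m : injective (emb m).
Proof. by have [_ tfX _] := hX m; exact: (coords_inj tfX (frame_indep m)). Qed.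

Lemma emb_comb m c : emb m (\sum_i c i *: frame m i) = \row_j val (c j).
Proof. exact: (coords_comb (frame_indep m) (frame_rspans m)). Qed.

Definition in_emb m (x : V) : Prop := exists y : X m, emb m y = x.

Lemma in_embB m x y : in_emb m x -> in_emb m y -> in_emb m (x - y).
Proof. by move=> [a <-] [b <-]; exists (a - b); rewrite embD (addfN (embD m)). Qed.

Lemma in_embZ m r x : in_emb m x -> in_emb m (r%:F *: x).
Proof. by move=> [a <-]; exists (loc_of m r *: a); rewrite embZ. Qed.

Lemma in_emb_frac m (x : V) :
  (forall j, exists a s, ~ m s /\ x 0 j = a%:F / s%:F) -> in_emb m x.
Proof.
move=> xm; have {}xm j : x 0 j \in loc_pred m by apply/loc_predP.
exists (\sum_j (Sub (x 0 j) (xm j) : localization m) *: frame m j).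
by rewrite emb_comb; apply/rowP => j; rewrite !mxE.
Qed.

Definition glued_pred : {pred V} := fun x => `[< forall m, in_emb m x >].

Lemma glued_pred_zmod_closed : zmod_closed glued_pred.
Proof.
split; first by apply/asboolP => m; exists 0; exact: (addf0 (embD m)).
by move=> x y /asboolP xP /asboolP yP; apply/asboolP => m; exact: in_embB.
Qed.

HB.instance Definition _ := GRing.isZmodClosed.Build V glued_pred glued_pred_zmod_closed.

Definition glued := {x : V | x \in glued_pred}.
HB.instance Definition _ := [isSub for (@sval _ _ : glued -> V)].
HB.instance Definition _ := [Choice of glued by <:].
HB.instance Definition _ := [SubChoice_isSubZmodule of glued by <:].

Lemma glued_predZ r x : x \in glued_pred -> r%:F *: x \in glued_pred.
Proof. by move=> /asboolP xP; apply/asboolP => m; exact: in_embZ. Qed.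

Definition glued_scale (r : R) (x : glued) : glued :=
  Sub (r%:F *: val x) (glued_predZ r (val x) (valP x)).

Lemma glued_scaleA a b x : glued_scale a (glued_scale b x) = glued_scale (a * b) x.
Proof. by apply: val_inj; rewrite /= scalerA rmorphM. Qed.
Lemma glued_scale1 : left_id 1 glued_scale.
Proof. by move=> x; apply: val_inj; rewrite /= rmorph1 scale1r. Qed.
Lemma glued_scaleDr : right_distributive glued_scale +%R.
Proof. by move=> a x y; apply: val_inj; rewrite /= scalerDr. Qed.
Lemma glued_scaleDl x : {morph glued_scale^~ x : a b / a + b}.
Proof. by move=> a b; apply: val_inj; rewrite /= rmorphD scalerDl. Qed.

HB.instance Definition _ := GRing.Zmodule_isLmodule.Build R glued
  glued_scaleA glued_scale1 glued_scaleDr glued_scaleDl.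

Lemma val_gluedZ r (x : glued) : val (r *: x) = r%:F *: val x.
Proof. by []. Qed.

Lemma val_glued_sum (I : Type) (r : seq I) (P : pred I) (F : I -> glued) :
  val (\sum_(i <- r | P i) F i) = \sum_(i <- r | P i) val (F i).
Proof. exact: (big_morph val (fun _ _ => erefl) erefl). Qed.

Lemma glued_in_emb m (x : glued) : in_emb m (val x).
Proof. by have /asboolP := valP x; apply. Qed.

Lemma glued_torsion_free : torsion_free glued.
Proof.
move=> d x d0 /(congr1 val) /eqP; rewrite val_gluedZ scaler_eq0 tofrac_eq0 (negbTE d0).
by move=> /eqP x0; apply: val_inj.
Qed.

Lemma delta_glued j : delta_mx 0 j \in glued_pred.
Proof.
apply/asboolP => m; apply: in_emb_frac => k.
exists ((delta_mx 0 j : 'rV[R]_n) 0 k), 1; split; first exact: mid_not1.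
by rewrite rmorph1 divr1 !mxE rmorph_nat.
Qed.

Definition glued_basis j : glued := Sub (delta_mx 0 j) (delta_glued j).

Lemma val_glued_comb (a : 'I_n -> R) : val (\sum_j a j *: glued_basis j) = \row_j (a j)%:F.
Proof.
rewrite val_glued_sum [RHS]row_sum_delta; apply: eq_bigr => j _.
by rewrite val_gluedZ mxE.
Qed.

Lemma glued_denominator (x : glued) : exists t (a : 'I_n -> R),
  t != 0 /\ t *: x = \sum_j a j *: glued_basis j.
Proof.
have [t [a [t0 ta]]] := frac_common_denominator (fun j => val x 0 j).
exists t, a; split => //; apply: val_inj; rewrite val_glued_comb val_gluedZ.
by apply/rowP => j; rewrite !mxE ta.
Qed.

Lemma glued_rank : has_rank glued n.
Proof.
exists glued_basis; split; last first.
  by move=> x; have [t [a [t0 ta]]] := glued_denominator x; exists t, a.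
move=> c /(congr1 val); rewrite val_glued_comb => /rowP c0 i.
by have /eqP := c0 i; rewrite !mxE tofrac_eq0 => /eqP.
Qed.

Lemma in_emb_of_denominators m (z : V) t (a : 'I_n -> R) s u r :
  (forall j, t%:F * z 0 j = (a j)%:F) -> ~ m u -> s * u = t * r -> in_emb m (s%:F *: z).
Proof.
move=> ta mu sut; apply: in_emb_frac => j; exists (r * a j), u; split => //.
apply: (canRL (mulfK _)); first by rewrite tofrac_eq0 (mid_not_neq0 mu).
by rewrite mxE mulrAC -rmorphM sut rmorphM mulrAC ta -rmorphM mulrC.
Qed.

Hypothesis hR : h_local R.

Lemma glued_local_denominator m (y : X m) :
  exists s, ~ m s /\ s%:F *: emb m y \in glued_pred.
Proof.
set z := emb m y.
have [t [a [t0 ta]]] := frac_common_denominator (fun j => z 0 j).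
have [mt mtP] := h_local_finite_maxideals hR t0.
have [s [ms sP]] : exists s, ~ m s /\
    forall m', List.In m' mt -> m' <> m -> in_emb m' (s%:F *: z).
  apply: (mid_not_common_multiple (Q := fun m' s => m' <> m -> in_emb m' (s%:F *: z))).
    by move=> m' s r sP /sP; rewrite rmorphM -scalerA; exact: in_embZ.
  move=> m' _; have [<-|m'm] := pselect (m' = m).
    by exists 1; split => //; exact: mid_not1.
  have [s [u [r [ms mu sut]]]] := h_local_divides_compl_mul hR (nesym m'm) t0.
  by exists s; split => // _; exact: in_emb_of_denominators ta mu sut.
exists s; split => //; apply/asboolP => m'.
have [->|m'm] := pselect (m' = m); first by apply: in_embZ; exists y.
have [/sP|m't] := pselect (List.In m' mt); first by apply.
by apply: (in_emb_of_denominators m' z t a s t s ta); [move/mtP | exact: mulrC].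
Qed.

Definition glued_proj m (x : glued) : X m := projT1 (cid (glued_in_emb m x)).

Lemma emb_glued_proj m x : emb m (glued_proj m x) = val x.
Proof. by rewrite /glued_proj; case: cid. Qed.

Lemma glued_localization_iso m : localization_iso m glued (X m).
Proof.
have emb0 := addf0 (embD m).
exists (glued_proj m); split.
- by move=> x y; apply: (emb_inj m); rewrite embD !emb_glued_proj.
- by move=> r x; apply: (emb_inj m); rewrite embZ !emb_glued_proj.
- move=> x; split => [x0|[s [ms sx]]].
    exists 1; split; first exact: mid_not1.
    by rewrite scale1r; apply: val_inj; rewrite -(emb_glued_proj m) x0 emb0.
  rewrite (glued_torsion_free s x (mid_not_neq0 ms) sx).
  by apply: (emb_inj m); rewrite emb_glued_proj emb0.
- move=> y; have [s [ms sy]] := glued_local_denominator m y.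
  exists (Sub (s%:F *: emb m y) sy : glued), s; split => //.
  by apply: (emb_inj m); rewrite emb_glued_proj embZ.
Qed.

Definition lift_denom m (y : X m) : R := projT1 (cid (glued_local_denominator m y)).

Lemma lift_denomP m y :
  ~ m (lift_denom m y) /\ (lift_denom m y)%:F *: emb m y \in glued_pred.
Proof. by rewrite /lift_denom; case: cid. Qed.

Definition glued_lift m y : glued := Sub ((lift_denom m y)%:F *: emb m y) (lift_denomP m y).2.

Lemma X_fg m : finitely_generated (X m).
Proof. by case: (hX m). Qed.

Definition gens_of m : seq (X m) := projT1 (cid (X_fg m)).

Lemma gens_ofP m : spans (fun i : 'I_(size (gens_of m)) => (gens_of m)`_i).
Proof. by rewrite /gens_of; case: cid. Qed.

Variable E : seq (maxideal R).

Definition gens : seq glued := [seq glued_basis j | j <- enum 'I_n] ++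
  flatten [seq [seq glued_lift m y | y <- gens_of m] | m <- E].

Local Notation gensF := (fun i : 'I_(size gens) => gens`_i).

Lemma glued_local_span_lifts m (x : glued) : List.In m E ->
  exists s, ~ m s /\ in_span gensF (s *: x).
Proof.
move=> mE; have [c yc] := gens_ofP m (glued_proj m x).
have [sg [a [msg sga]]] := loc_common_denominator c.
pose d (k : 'I_(size (gens_of m))) := lift_denom m (gens_of m)`_k.
exists (sg * \prod_k d k); split.
  by apply: mid_notM => //; apply: mid_not_prod => k _; case: (lift_denomP m (gens_of m)`_k).
have -> : (sg * \prod_k d k) *: x =
    \sum_k (a k * \prod_(j | j != k) d j) *: glued_lift m (gens_of m)`_k.
  apply: val_inj; rewrite val_gluedZ val_glued_sum -(emb_glued_proj m x) yc.
  rewrite (addf_sum (embD m)) scaler_sumr; apply: eq_bigr => k _.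
  rewrite val_gluedZ embZ /= !scalerA; congr (_ *: _).
  have := congr1 val (sga k); rewrite !rmorphM /= => ska.
  by rewrite (bigD1 k) //= !rmorphM -ska /d; ring.
apply: in_span_sum => k _; apply: in_spanZ; apply: in_span_nth.
rewrite mem_cat; apply/orP; right.
apply: (mem_flatten_map mE).
by apply: map_f; exact: mem_nth.
Qed.

Lemma glued_local_span_free m (x : glued) : free_module (X m) ->
  exists s, ~ m s /\ in_span gensF (s *: x).
Proof.
move=> /frame_spans fspan; have [c yc] := fspan (glued_proj m x).
have [s [a [ms sa]]] := loc_common_denominator c.
exists s; split => //.
have -> : s *: x = \sum_j a j *: glued_basis j.
  apply: val_inj; rewrite val_glued_comb val_gluedZ -(emb_glued_proj m x) yc emb_comb.
  by apply/rowP => j; rewrite !mxE; have := congr1 val (sa j); rewrite rmorphM.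
apply: in_span_sum => j _; apply: in_spanZ; apply: in_span_nth.
by rewrite mem_cat map_f ?mem_enum.
Qed.

Lemma glued_fg : (forall m, ~ List.In m E -> free_module (X m)) -> finitely_generated glued.
Proof.
move=> Efree; exists gens => x.
have := ideal_full (is_ideal_span_conductor gensF x); rewrite scale1r; apply=> m.
have [mE|/Efree mfree] := pselect (List.In m E).
  by have [s [ms sx]] := glued_local_span_lifts m x mE; exists s.
by have [s [ms sx]] := glued_local_span_free m x mfree; exists s.
Qed.

End Gluing.

Theorem mainTheorem16 (R : idomainType) (hR : h_local R) (n : nat)
    (X : forall m : maxideal R, lmodType (localization m))
    (hX : forall m : maxideal R,
        [/\ finitely_generated (X m), torsion_free (X m) & has_rank (X m) n]) :
  (exists N : lmodType R,
      [/\ finitely_generated N, torsion_free N, has_rank N n &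
          forall m : maxideal R, localization_iso m N (X m)])
  <->
  (exists L : seq (R -> Prop), forall m : maxideal R,
      (forall P, List.In P L -> ~ same_ideal m P) -> free_module (X m)).
Proof.
split.
  by case=> N [Nfg tfN rkN iso]; exact: (h_local_free_localizations hR Nfg tfN rkN iso).
case=> L Lfree; have [E Emax] := maxideals_of_preds L.
have Efree m : ~ List.In m E -> free_module (X m).
  by move=> mE; apply: Lfree => P LP mP; apply: mE; apply: Emax; exists P.
exists (glued hX); split.
- exact: glued_fg hX hR E Efree.
- exact: glued_torsion_free hX.
- exact: glued_rank hX.
- exact: glued_localization_iso hX hR.
Qed.
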